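(* Let $X\in\{\mathsf{T}\mathsf{S},\ \mathsf{T}\mathsf{S}\mathsf{T}\}$ and $Y\in\{\mathsf{S}\mathsf{T},\ \mathsf{S}\mathsf{T}\mathsf{S},\ \mathsf{S}\mathsf{T}\mathsf{S}\mathsf{T}\}$. Then $X\not\sqsubseteq Y$ and $Y\not\sqsubseteq X$.
   Context: Fix attribute–taxonomy pairs $A_1{:}T_1,\dots,A_d{:}T_d$ with distinct attribute names, where each taxonomy $T_i=(V_i,\le_{V_i})$ is a poset. A t-tuple over a t-schema $S\subseteq\{A_1{:}T_1,\dots,A_d{:}T_d\}$ maps each $A_i$ in $S$ to a value of $V_i$; $\mathcal{D}$ is the set of all t-tuples over all such t-schemas. A preference relation is a binary relation $\succeq$ on $\mathcal{D}$. Preferences are given by a formula $F(x,y)=\bigvee_i P_i(x,y)$, a disjunction of statements; each statement $P_i$ is a disjunction of clauses, each clause a satisfiable conjunction of atoms of the forms $x[A_i]\le_{V_i} v$, $x[A_i]\not\le_{V_i} v$, $y[A_i]\le_{V_i} v$, $y[A_i]\not\le_{V_i} v$; the formula induces $t_1\succeq t_2\iff F(t_1,t_2)$. Operator $\mathsf{T}$ maps a formula to one inducing the transitive closure over $\mathcal{D}$ of the induced relation. Operator $\mathsf{S}$ (specificity-based refinement): repeat rounds; in a round, for each statement $P_i$ let $\mathrm{Impl}(P_i)$ be the set of statements $P_j$ such that $P_j(t_2,t_1)\Rightarrow P_i(t_1,t_2)$ for all $t_1,t_2\in\mathcal{D}$ but not conversely; simultaneously replace every $P_i$ with nonempty $\mathrm{Impl}(P_i)$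 by $P_i(x,y)\wedge\bigwedge_{P_j\in \mathrm{Impl}(P_i)}\neg P_j(y,x)$; stop when no $\mathrm{Impl}$ set is nonempty. After each operator, contradictory clauses and subsumed statements are removed. For $X\in\{\mathsf{T},\mathsf{S}\}^*$, $\succeq_X$ is the relation induced by applying the operators of $X$ in order to the initial formula. Containment $X\sqsubseteq Y$ means $\succeq_X\subseteq\succeq_Y$ for every initial preference formula (over any taxonomies). *)

From mathcomp Require Import all_boot.
From Stdlib Require Import List.

Set Implicit Arguments.
Unset Strict Implicit.
Unset Printing Implicit Defensive.

Record taxonomy := Taxonomy {
  tcar : Type;
  tle : tcar -> tcar -> Prop;
  tle_refl : forall a, tle a a;
  tle_anti : forall a b, tle a b -> tle b a -> a = b;
  tle_trans : forall a b c, tle a b -> tle b c -> tle a c }.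
Arguments tle : clear implicits.
Arguments tle {t}.

(* Fixed attribute-taxonomy pairs A_1:T_1, ..., A_d:T_d; attribute A_i is
   identified with the index i : 'I_d (so names are distinct). *)
Record tsetting := TSetting {
  nattr : nat;
  tax : 'I_nattr -> taxonomy }.
Arguments tax : clear implicits.

(* A t-tuple over some t-schema S: attributes outside S are mapped to None.
   D := ttuple s is the set of all t-tuples over all t-schemas. *)
Definition ttuple (s : tsetting) := forall i : 'I_(nattr s), option (tcar (tax s i)).

Definition prel (s : tsetting) := ttuple s -> ttuple s -> Prop.

Definition val_le (s : tsetting) (t : ttuple s) (i : 'I_(nattr s))
  (v : tcar (tax s i)) : Prop :=
  match t i with Some a => tle a v | None => False end.

Inductive atom (s : tsetting) :=
| XLe  (i : 'I_(nattr s)) (v : tcar (tax s i))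
| XNle (i : 'I_(nattr s)) (v : tcar (tax s i))
| YLe  (i : 'I_(nattr s)) (v : tcar (tax s i))
| YNle (i : 'I_(nattr s)) (v : tcar (tax s i)).

Definition atom_holds (s : tsetting) (a : atom s) (x y : ttuple s) : Prop :=
  match a with
  | XLe i v => val_le x v
  | XNle i v => ~ val_le x v
  | YLe i v => val_le y v
  | YNle i v => ~ val_le y v
  end.

Definition clause (s : tsetting) := list (atom s).
Definition clause_holds (s : tsetting) (c : clause s) (x y : ttuple s) : Prop :=
  forall a, List.In a c -> atom_holds a x y.

Definition statement (s : tsetting) := list (clause s).
Definition stmt_holds (s : tsetting) (st : statement s) (x y : ttuple s) : Prop :=
  exists c, List.In c st /\ clause_holds c x y.

Definition formula (s : tsetting) := list (statement s).

Definition wf_formula (s : tsetting) (F : formula s) : Prop :=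
  F <> nil /\
  forall st, List.In st F ->
    st <> nil /\ forall c, List.In c st -> exists x y : ttuple s, clause_holds c x y.

(* Semantic representation of a formula: the set of (relations induced by)
   its statements. *)
Definition stmts (s : tsetting) := prel s -> Prop.

Definition sem (s : tsetting) (F : formula s) : stmts s :=
  fun P => exists st, List.In st F /\ P = stmt_holds st.

Definition induced (s : tsetting) (G : stmts s) : prel s :=
  fun x y => exists P, G P /\ P x y.

Definition implies (s : tsetting) (P Q : prel s) : Prop :=
  forall x y, P x y -> Q x y.

(* removal of subsumed statements (contradictory clauses are semantically void) *)
Definition prune (s : tsetting) (G : stmts s) : stmts s :=
  fun P => G P /\ ~ (exists Q, G Q /\ implies P Q /\ ~ implies Q P).

(* Operator T: statements of the result are the compositions of nonempty
   chains of statements (their union is the transitive closure), then pruned. *)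
Fixpoint chain (s : tsetting) (P : prel s) (l : list (prel s)) : prel s :=
  match l with
  | nil => P
  | Q :: l' => fun x y => exists z, P x z /\ chain Q l' z y
  end.

Definition chains (s : tsetting) (G : stmts s) : stmts s :=
  fun R => exists P l, G P /\ (forall Q, List.In Q l -> G Q) /\ R = chain P l.

Definition Tstep (s : tsetting) (G : stmts s) : stmts s := prune (chains G).

Definition impl (s : tsetting) (G : stmts s) (P Q : prel s) : Prop :=
  G Q /\ (forall x y, Q y x -> P x y) /\ ~ (forall x y, P x y -> Q y x).

Definition refine (s : tsetting) (G : stmts s) (P : prel s) : prel s :=
  fun x y => P x y /\ forall Q, impl G P Q -> ~ Q y x.

Definition Sround (s : tsetting) (G : stmts s) : stmts s :=
  fun R => exists P, G P /\ R = refine G P.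

Definition Sstable (s : tsetting) (G : stmts s) : Prop :=
  forall P Q, G P -> ~ impl G P Q.

(* S G H : the rounds reach a stage with all Impl sets empty, and H is that
   stage after pruning. (Deterministic; undefined if rounds never stop.) *)
Definition Sres (s : tsetting) (G H : stmts s) : Prop :=
  exists n, Sstable (iter n (@Sround s) G) /\ H = prune (iter n (@Sround s) G).

Inductive op := OpT | OpS.

Definition step (s : tsetting) (o : op) (G H : stmts s) : Prop :=
  match o with
  | OpT => H = Tstep G
  | OpS => Sres G H
  end.

Fixpoint Eval (s : tsetting) (w : list op) (G H : stmts s) : Prop :=
  match w with
  | nil => H = G
  | o :: w' => exists K, step o G K /\ Eval w' K H
  end.

Definition contained (X Y : list op) : Prop :=
  forall (s : tsetting) (F : formula s), wf_formula F ->
  forall GX GY, Eval X (sem F) GX -> Eval Y (sem F) GY ->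
  forall x y, induced GX x y -> induced GY x y.

From Pilot Require Import Defs.
From mathcomp Require Import all_boot.
From Stdlib Require Import Classical.

Set Implicit Arguments.
Unset Strict Implicit.
Unset Printing Implicit Defensive.

(* Work with a single attribute whose taxonomy is discrete (the order is
   equality). A statement is then just a finite relation r on values,
   x >= y iff (x[A], y[A]) is in r, and both operators can be computed on
   finite relations: S removes from r the reverse of every q with
   q^-1 included in r but r^-1 not included in q, and T keeps the maximal
   compositions of chains of statements.
   Example 1 takes M = {0,1}^2 and Q = {(0,1)}. Applying T first, every chain
   lies in M, so the result is {M} and 1 >= 0 holds. Applying S first, M loses
   (1,0) because of Q, after which Q is subsumed and M \ {(1,0)} is transitive,
   so 1 >= 0 never holds.
   Example 2 takes M = {(0,1),(3,2),(4,5)}, K = {(1,0),(2,3)} and L = {(0,1)}.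
   Applying S first, L survives untouched, so 0 >= 1 holds. Applying T first,
   L is subsumed by M before S strips (0,1) from M using K, so 0 >= 1 fails. *)

Section UnarySetting.

Variable T : eqType.

Definition discrete_taxonomy : taxonomy :=
  @Taxonomy T eq (@erefl T) (fun _ _ e _ => e) (fun _ _ _ => @etrans T _ _ _).

Definition unary_setting : tsetting := @TSetting 1 (fun _ => discrete_taxonomy).

Local Notation s := unary_setting.
Local Notation finrel := (seq (T * T)).

Definition attr0 : 'I_(nattr s) := ord0.

Definition point (a : T) : ttuple s := fun _ => Some a.

Definition prel_of (r : finrel) : prel s :=
  fun x y => exists a b, x attr0 = Some a /\ y attr0 = Some b /\ (a, b) \in r.

Definition prel_eq (P Q : prel s) := forall x y, P x y <-> Q x y.

Lemma prel_of_point r a b : prel_of r (point a) (point b) <-> (a, b) \in r.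
Proof.
split; first by case=> a' [b'] [[<-] [[<-]]].
by move=> rab; exists a, b.
Qed.

Definition subrelb (r1 r2 : finrel) := all (mem r2) r1.

Lemma implies_prel_ofP r1 r2 : Defs.implies (prel_of r1) (prel_of r2) <-> subrelb r1 r2.
Proof.
split=> [r12 | /allP r12 x y [a [b [xa [yb rab]]]]].
  by apply/allP=> -[a b] /prel_of_point/r12/prel_of_point.
by exists a, b; split=> //; split=> //; apply: r12.
Qed.

Lemma implies_prel_eq P Q p q : prel_eq P (prel_of p) -> prel_eq Q (prel_of q) ->
  Defs.implies P Q <-> subrelb p q.
Proof.
move=> Pp Qq; rewrite -implies_prel_ofP.
by split=> PQ x y /Pp/PQ/Qq.
Qed.

Definition reverse (r : finrel) : finrel := map swap_pair r.

Lemma mem_reverse r a b : ((a, b) \in reverse r) = ((b, a) \in r).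
Proof. by rewrite -[(a, b)]/(swap_pair (b, a)) (mem_map (can_inj swap_pairK)). Qed.

Lemma prel_of_reverse r x y : prel_of (reverse r) x y <-> prel_of r y x.
Proof.
by split=> -[a [b [xa [yb rab]]]]; exists b, a; rewrite ?mem_reverse in rab *.
Qed.

Definition represents (G : stmts s) (Ls : seq finrel) :=
  (forall P, G P -> exists2 r, r \in Ls & prel_eq P (prel_of r)) /\
  (forall r, r \in Ls -> exists2 P, G P & prel_eq P (prel_of r)).

Lemma induced_point G Ls a b : represents G Ls ->
  induced G (point a) (point b) <-> has (fun r => (a, b) \in r) Ls.
Proof.
move=> [GLs LsG]; split.
  case=> P [GP Pab]; have [r rLs Pr] := GLs _ GP.
  by apply/hasP; exists r => //; apply/prel_of_point/Pr.
move=> /hasP [r rLs rab]; have [P GP Pr] := LsG _ rLs.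
by exists P; split=> //; apply/Pr/prel_of_point.
Qed.

Lemma InP (A : eqType) (x : A) l : reflect (List.In x l) (x \in l).
Proof.
elim: l => [|y l IHl] /=; first by constructor.
rewrite inE; apply: (iffP orP) => [[/eqP->|/IHl] | [->|/IHl]]; by [left|right].
Qed.

Definition stmt_of_rel (r : finrel) : statement s :=
  List.map (fun p => [:: @XLe s attr0 p.1; @YLe s attr0 p.2]) r.

Definition formula_of (Ls : seq finrel) : formula s := List.map stmt_of_rel Ls.

Lemma stmt_of_relE r : prel_eq (stmt_holds (stmt_of_rel r)) (prel_of r).
Proof.
move=> x y; split.
  case=> c [/List.in_map_iff [[a b] [<- /InP rab]] cxy].
  have := cxy _ (or_introl erefl); have := cxy _ (or_intror (or_introl erefl)).
  rewrite /= /val_le; case xa: (x attr0) => [a'|] //; case yb: (y attr0) => [b'|] // bb' aa'.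
  by exists a', b'; rewrite xa yb; have -> : a' = a := aa'; have -> : b' = b := bb'.
case=> a [b [xa [yb rab]]]; exists [:: @XLe s attr0 a; @YLe s attr0 b]; split.
  by apply/List.in_map_iff; exists (a, b); split=> //; apply/InP.
by move=> ? [<-|[<-|[]]]; rewrite /= /val_le ?xa ?yb.
Qed.

Lemma represents_formula_of Ls : represents (sem (formula_of Ls)) Ls.
Proof.
split=> [P [st [/List.in_map_iff [r [<- /InP rLs]] ->]] | r rLs].
  by exists r => //; apply: stmt_of_relE.
exists (stmt_holds (stmt_of_rel r)); last exact: stmt_of_relE.
by exists (stmt_of_rel r); split=> //; apply/List.in_map_iff; exists r; split=> //; apply/InP.
Qed.

Lemma wf_formula_of Ls : Ls != [::] -> [::] \notin Ls -> wf_formula (formula_of Ls).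
Proof.
move=> Ls_n0 nil_Ls; split; first by case: Ls Ls_n0 nil_Ls.
move=> _ /List.in_map_iff [r [<- /InP rLs]]; split.
  by case: r rLs => // /negP; rewrite (negPf nil_Ls).
move=> _ /List.in_map_iff [[a b] [<- _]].
by exists (point a), (point b) => ? [<-|[<-|[]]].
Qed.

Definition prune_rels (Ls : seq finrel) :=
  [seq r <- Ls | ~~ has (fun r' => subrelb r r' && ~~ subrelb r' r) Ls].

Lemma represents_prune G Ls : represents G Ls -> represents (prune G) (prune_rels Ls).
Proof.
move=> [GLs LsG]; split=> [P [GP maxP] | r].
  have [r rLs Pr] := GLs _ GP; exists r => //.
  rewrite mem_filter rLs andbT; apply/hasPn=> r' r'Ls; apply/negP=> /andP [rr' nr'r].
  apply: maxP; have [Q GQ Qr'] := LsG _ r'Ls; exists Q; split=> //.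
  rewrite (implies_prel_eq Pr Qr') (implies_prel_eq Qr' Pr).
  by split=> // r'r; rewrite r'r in nr'r.
rewrite mem_filter => /andP [/hasPn maxr rLs].
have [P GP Pr] := LsG _ rLs; exists P => //; split=> // -[Q [GQ]].
have [q qLs Qq] := GLs _ GQ.
rewrite (implies_prel_eq Pr Qq) (implies_prel_eq Qq Pr) => -[rq nqr].
by have := maxr _ qLs; rewrite rq /=; case: (subrelb q r) nqr.
Qed.

Definition impl_rel (r q : finrel) := subrelb (reverse q) r && ~~ subrelb (reverse r) q.

Lemma rev_implies_prel_eq P Q p q : prel_eq P (prel_of p) -> prel_eq Q (prel_of q) ->
  (forall x y, P x y -> Q y x) <-> subrelb (reverse p) q.
Proof.
move=> Pp Qq; rewrite -implies_prel_ofP.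
by split=> PQ x y; [move=> /prel_of_reverse/Pp/PQ/Qq | move=> /Pp/prel_of_reverse/PQ/Qq].
Qed.

Lemma impl_prel_eq G P Q p q : prel_eq P (prel_of p) -> prel_eq Q (prel_of q) ->
  impl G P Q <-> G Q /\ impl_rel p q.
Proof.
move=> Pp Qq.
have qp : (forall x y, Q y x -> P x y) <-> subrelb (reverse q) p.
  by rewrite -(rev_implies_prel_eq Qq Pp); split=> QP x y; apply: QP.
rewrite /impl /impl_rel qp (rev_implies_prel_eq Pp Qq).
by split=> [[GQ [-> /negP]] | [GQ /andP [-> /negP]]].
Qed.

Definition refine_rel (Ls : seq finrel) (r : finrel) : finrel :=
  [seq p <- r | ~~ has (fun q => impl_rel r q && (p \in reverse q)) Ls].

Definition Sround_rels (Ls : seq finrel) := map (refine_rel Ls) Ls.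

Definition Sstable_rels (Ls : seq finrel) := all (fun r => ~~ has (impl_rel r) Ls) Ls.

Lemma refine_prel_eq G Ls P r : represents G Ls -> prel_eq P (prel_of r) ->
  prel_eq (refine G P) (prel_of (refine_rel Ls r)).
Proof.
move=> [GLs LsG] Pr x y; split=> [[/Pr [a [b [xa [yb rab]]]] notQ] | ].
  exists a, b; split=> //; split=> //.
  rewrite mem_filter rab andbT; apply/hasPn=> q qLs; apply/negP=> /andP [rq abq].
  have [Q GQ Qq] := LsG _ qLs.
  apply: (notQ Q); first exact/(impl_prel_eq _ Pr Qq).
  by apply/Qq/prel_of_reverse; exists a, b.
case=> a [b [xa [yb]]]; rewrite mem_filter => /andP [/hasPn noq rab].
split=> [|Q PQ]; first by apply/Pr; exists a, b.
have [q qLs Qq] := GLs _ (proj1 PQ).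
have [_ rq] := proj1 (impl_prel_eq _ Pr Qq) PQ.
move=> /Qq/prel_of_reverse [a' [b' [xa' [yb' abq]]]].
move: xa' yb' abq; rewrite xa yb => -[<-] [<-] abq.
by have := noq _ qLs; rewrite rq abq.
Qed.

Lemma represents_Sround G Ls : represents G Ls -> represents (Sround G) (Sround_rels Ls).
Proof.
move=> HG; have [GLs LsG] := HG; split=> [_ [P [GP ->]] | _ /mapP [r rLs ->]].
  have [r rLs Pr] := GLs _ GP.
  by exists (refine_rel Ls r); [apply: map_f | apply: refine_prel_eq].
have [P GP Pr] := LsG _ rLs.
by exists (refine G P); [exists P | apply: refine_prel_eq].
Qed.

Lemma represents_iter_Sround n G Ls : represents G Ls ->
  represents (iter n (@Sround s) G) (iter n Sround_rels Ls).
Proof. by move=> HG; elim: n => //= n; apply: represents_Sround. Qed.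

Lemma Sstable_rels_Sstable G Ls : represents G Ls -> Sstable_rels Ls -> Sstable G.
Proof.
move=> [GLs _] /allP stableLs P Q GP PQ.
have [r rLs Pr] := GLs _ GP; have [q qLs Qq] := GLs _ (proj1 PQ).
have [_ rq] := proj1 (impl_prel_eq _ Pr Qq) PQ.
by have /hasPn/(_ _ qLs) := stableLs _ rLs; rewrite rq.
Qed.

Definition comp_rel (r1 r2 : finrel) : finrel :=
  [seq (p.1, q.2) | p <- r1, q <- [seq q <- r2 | q.1 == p.2]].

Lemma mem_comp_rel r1 r2 a b :
  reflect (exists c, (a, c) \in r1 /\ (c, b) \in r2) ((a, b) \in comp_rel r1 r2).
Proof.
apply: (iffP allpairsPdep) => [[[a' c] [[c' b'] [ac]]] | [c [ac cb]]].
  by rewrite mem_filter /= => /andP [/eqP-> cb] [-> ->]; exists c.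
by exists (a, c), (c, b); rewrite mem_filter /= eqxx.
Qed.

Lemma prel_of_comp r1 r2 x y :
  prel_of (comp_rel r1 r2) x y <-> exists z, prel_of r1 x z /\ prel_of r2 z y.
Proof.
split=> [[a [b [xa [yb /mem_comp_rel [c [ac cb]]]]]] |].
  by exists (point c); split; [exists a, c | exists c, b].
case=> z [[a [c [xa [zc ac]]]] [c' [b [zc' [yb cb]]]]].
move: zc' cb; rewrite zc => -[<-] cb.
by exists a, b; split=> //; split=> //; apply/mem_comp_rel; exists c.
Qed.

Fixpoint compw (r : finrel) (w : seq finrel) : finrel :=
  if w is r' :: w' then comp_rel r (compw r' w') else r.

Lemma chain_compw G Ls r w : represents G Ls -> r \in Ls -> all (mem Ls) w ->
  exists P l, [/\ G P, forall Q, List.In Q l -> G Q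
                & prel_eq (chain P l) (prel_of (compw r w))].
Proof.
move=> [_ LsG]; elim: w r => [|r' w IHw] r rLs /=.
  by have [P GP Pr] := LsG _ rLs; exists P, [::].
case/andP=> r'Ls wLs; have [P GP Pr] := LsG _ rLs.
have [P' [l [GP' Gl Cw]]] := IHw _ r'Ls wLs.
exists P, (P' :: l); split=> // [Q [<-|/Gl] //|x y].
by rewrite prel_of_comp; split=> -[z [/Pr Pxz /Cw Czy]]; exists z.
Qed.

Definition reaches (w : seq op) (Ls Lf : seq finrel) :=
  forall G, represents G Ls -> exists2 H, Eval w G H & represents H Lf.

Lemma reaches_nil L : reaches [::] L L.
Proof. by move=> G HG; exists G. Qed.

Lemma reaches_S n Ms w Ls Lf : Sstable_rels (iter n Sround_rels Ls) ->
  prune_rels (iter n Sround_rels Ls) = Ms -> reaches w Ms Lf -> reaches (OpS :: w) Ls Lf.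
Proof.
move=> stable <- reach G HG; have HGn := represents_iter_Sround n HG.
have [H EH RH] := reach _ (represents_prune HGn).
exists H => //; exists (prune (iter n (@Sround s) G)); split=> //.
by exists n; split=> //; apply: Sstable_rels_Sstable stable.
Qed.

Section TCertificate.

(* T applied to (a representation of) Ls yields Ms when every chain is
   dominated by a member of Ms (by induction along the chain, from the first
   two hypotheses), every member of Ms is itself a chain (witnessed by Ws),
   and no member of Ms is strictly below another. *)
Variables (Ls Ms : seq finrel) (Ws : seq (finrel * seq finrel)).
Hypothesis Ls_dominated : all (fun r => has (subrelb r) Ms) Ls.
Hypothesis comp_dominated :
  all (fun r => all (fun m => has (subrelb (comp_rel r m)) Ms) Ms) Ls.
Hypothesis Ms_chains : all (fun m => has (fun rw =>
  [&& rw.1 \in Ls, all (mem Ls) rw.2, subrelb (compw rw.1 rw.2) m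
    & subrelb m (compw rw.1 rw.2)]) Ws) Ms.
Hypothesis Ms_antichain : all (fun m => all (fun m' => subrelb m m' ==> subrelb m' m) Ms) Ms.

Lemma chain_dominated G P l : represents G Ls -> G P -> (forall Q, List.In Q l -> G Q) ->
  exists2 m, m \in Ms & Defs.implies (chain P l) (prel_of m).
Proof.
move=> [GLs _]; elim: l P => [|Q l IHl] P GP Gl /=.
  have [r rLs Pr] := GLs _ GP; have /hasP [m mMs rm] := allP Ls_dominated _ rLs.
  by exists m => // x y /Pr; apply: (proj2 (implies_prel_ofP r m) rm).
have [m mMs Cm] := IHl Q (Gl _ (or_introl erefl)) (fun Q' lQ' => Gl _ (or_intror lQ')).
have [r rLs Pr] := GLs _ GP.
have /hasP [m' m'Ms rmm'] := allP (allP comp_dominated _ rLs) _ mMs.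
exists m' => // x y [z [/Pr Pxz /Cm Czy]].
by apply: (proj2 (implies_prel_ofP _ _) rmm'); apply/prel_of_comp; exists z.
Qed.

Lemma chains_Ms G m : represents G Ls -> m \in Ms ->
  exists2 P, chains G P & prel_eq P (prel_of m).
Proof.
move=> HG mMs; have /hasP [[r w] _ /and4P [rLs wLs wm mw]] := allP Ms_chains _ mMs.
have [P [l [GP Gl Cw]]] := chain_compw HG rLs wLs.
exists (chain P l); first by exists P, l.
by move=> x y; rewrite Cw; split; apply: (proj2 (implies_prel_ofP _ _)).
Qed.

Lemma represents_Tstep G : represents G Ls -> represents (Tstep G) Ms.
Proof.
move=> HG; split=> [_ [[P [l [GP [Gl ->]]]] maxC] | m mMs].
  have [m mMs Cm] := chain_dominated HG GP Gl; exists m => //.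
  have [Pm CPm Pmm] := chains_Ms HG mMs.
  have [mC | mnC] := classic (Defs.implies (prel_of m) (chain P l)).
    by move=> x y; split; [apply: Cm | apply: mC].
  exfalso; apply: maxC; exists Pm; split=> //; split=> [x y /Cm/Pmm //|PmC].
  by apply: mnC => x y /Pmm/PmC.
have [Pm CPm Pmm] := chains_Ms HG mMs; exists Pm => //; split=> //.
case=> _ [[P [l [GP [Gl ->]]]] [PmC nCPm]].
have [m' m'Ms Cm'] := chain_dominated HG GP Gl.
have mm' : subrelb m m' by apply/implies_prel_ofP => x y /Pmm/PmC/Cm'.
have /implies_prel_ofP m'm := implyP (allP (allP Ms_antichain _ mMs) _ m'Ms) mm'.
by apply: nCPm => x y /Cm'/m'm/Pmm.
Qed.

Lemma reaches_T w Lf : reaches w Ms Lf -> reaches (OpT :: w) Ls Lf.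
Proof.
move=> reach G HG; have [H EH RH] := reach _ (represents_Tstep HG).
by exists H => //; exists (Tstep G).
Qed.

End TCertificate.

Lemma not_contained_of_reaches X Y Ls LX LY a b :
  Ls != [::] -> [::] \notin Ls -> reaches X Ls LX -> reaches Y Ls LY ->
  has (fun r => (a, b) \in r) LX -> ~~ has (fun r => (a, b) \in r) LY ->
  ~ contained X Y.
Proof.
move=> Ls_n0 nil_Ls reachX reachY abX /negP abY XY.
have [GX EX RX] := reachX _ (represents_formula_of Ls).
have [GY EY RY] := reachY _ (represents_formula_of Ls).
have := XY _ _ (wf_formula_of Ls_n0 nil_Ls) _ _ EX EY (point a) (point b).
by move=> /(_ (proj2 (induced_point _ _ RX) abX))/(induced_point _ _ RY).
Qed.

End UnarySetting.

Definition M1 : seq (nat * nat) := [:: (0, 1); (1, 0); (0, 0); (1, 1)].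
Definition Q1 : seq (nat * nat) := [:: (0, 1)].
Definition M1' : seq (nat * nat) := [:: (0, 1); (0, 0); (1, 1)].

Lemma example1_T_first X : X = [:: OpT; OpS] \/ X = [:: OpT; OpS; OpT] ->
  reaches X [:: M1; Q1] [:: M1].
Proof.
have T_M1 w : reaches w [:: M1] [:: M1] -> reaches (OpT :: w) [:: M1] [:: M1].
  exact: (reaches_T (Ws := [:: (M1, [::])])).
have S_M1 w : reaches w [:: M1] [:: M1] -> reaches (OpS :: w) [:: M1] [:: M1].
  exact: (reaches_S (n := 0)).
case=> ->; apply: (reaches_T (Ms := [:: M1]) (Ws := [:: (M1, [::])])) => //;
  repeat first [apply: (T_M1) | apply: (S_M1)]; exact: reaches_nil.
Qed.

Lemma example1_S_first Y :
  Y = [:: OpS; OpT] \/ Y = [:: OpS; OpT; OpS] \/ Y = [:: OpS; OpT; OpS; OpT] ->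
  reaches Y [:: M1; Q1] [:: M1'].
Proof.
have T_M1' w : reaches w [:: M1'] [:: M1'] -> reaches (OpT :: w) [:: M1'] [:: M1'].
  exact: (reaches_T (Ws := [:: (M1', [::])])).
have S_M1' w : reaches w [:: M1'] [:: M1'] -> reaches (OpS :: w) [:: M1'] [:: M1'].
  exact: (reaches_S (n := 0)).
case=> [->|[->|->]]; apply: (reaches_S (n := 1) (Ms := [:: M1'])) => //;
  repeat first [apply: (T_M1') | apply: (S_M1')]; exact: reaches_nil.
Qed.

Definition M2 : seq (nat * nat) := [:: (0, 1); (3, 2); (4, 5)].
Definition K2 : seq (nat * nat) := [:: (1, 0); (2, 3)].
Definition L2 : seq (nat * nat) := [:: (0, 1)].

Lemma example2_T_first X : X = [:: OpT; OpS] \/ X = [:: OpT; OpS; OpT] ->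
  reaches X [:: M2; K2; L2] [:: [:: (4, 5)]; K2; [:: (0, 0); (3, 3)]; [:: (1, 1); (2, 2)]].
Proof.
set TX := (X in reaches _ _ X).
have T_TX w : reaches w TX TX -> reaches (OpT :: w) TX TX.
  exact: (reaches_T (Ws := [seq (m, [::]) | m <- TX])).
case=> ->; apply: (reaches_T (Ms := [:: M2; K2; [:: (0, 0); (3, 3)]; [:: (1, 1); (2, 2)]])
    (Ws := [:: (M2, [::]); (K2, [::]); (M2, [:: K2]); (K2, [:: M2])])) => //;
  apply: (reaches_S (n := 1) (Ms := TX)) => //;
  repeat apply: (T_TX); exact: reaches_nil.
Qed.

Lemma example2_S_first Y :
  Y = [:: OpS; OpT] \/ Y = [:: OpS; OpT; OpS] \/ Y = [:: OpS; OpT; OpS; OpT] ->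
  reaches Y [:: M2; K2; L2] [:: [:: (4, 5)]; [:: (2, 3)]; L2].
Proof.
set SY := (X in reaches _ _ X).
have T_SY w : reaches w SY SY -> reaches (OpT :: w) SY SY.
  exact: (reaches_T (Ws := [seq (m, [::]) | m <- SY])).
have S_SY w : reaches w SY SY -> reaches (OpS :: w) SY SY.
  exact: (reaches_S (n := 0)).
case=> [->|[->|->]]; apply: (reaches_S (n := 1) (Ms := SY)) => //;
  repeat first [apply: (T_SY) | apply: (S_SY)]; exact: reaches_nil.
Qed.

Theorem mainTheorem10 (X Y : list op) :
  (X = [:: OpT; OpS] \/ X = [:: OpT; OpS; OpT]) ->
  (Y = [:: OpS; OpT] \/ Y = [:: OpS; OpT; OpS] \/ Y = [:: OpS; OpT; OpS; OpT]) ->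
  ~ contained X Y /\ ~ contained Y X.
Proof.
move=> HX HY; split.
  exact: (not_contained_of_reaches (a := 1) (b := 0) _ _ (example1_T_first HX)
                                                         (example1_S_first HY)).
exact: (not_contained_of_reaches (a := 0) (b := 1) _ _ (example2_S_first HY)
                                                       (example2_T_first HX)).
Qed.
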